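(* Let $k$ be a field of characteristic zero, $\mathcal{A}$ a split $k$-linear abelian category, and $\mathbb{G}=\pi_1[1]\rtimes_z\pi_0[0]$ a strict skeletal 2-group with $\pi_0$ and $\pi_1$ finite. Let $V_\bullet=(0:V_1\to V_0)$ be an object of $\mathbf{Ch}'_2(\mathcal{A})$ and let $(\rho_1,\rho_0,\beta,c)$ be a representation of $\mathbb{G}$ on $V_\bullet$. Then (i) $\beta=0$, and (ii) the representation $(\rho_1,\rho_0,0,c)$ is equivalent, in the 2-category $\mathbf{Rep}_{\mathbf{Ch}_2(\mathcal{A})}(\mathbb{G})$, to $(\rho_1,\rho_0,0,0)$. In particular, up to equivalence a representation of $\mathbb{G}$ in $\mathbf{Ch}'_2(\mathcal{A})$ is completely determined by a pair of representations $\rho_1,\rho_0$ of $\pi_0$ in $\mathcal{A}$.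
   Context: $\mathbf{Ch}_2(\mathcal{A})$: the strict 2-category whose objects are morphisms $d:V_1\to V_0$ in $\mathcal{A}$; 1-cells $(f_1,f_0)$ are commuting squares; 2-cells $\sigma:(f_1,f_0)\Rightarrow(g_1,g_0)$ are morphisms $\sigma:V_0\to W_1$ with $d_W\sigma=g_0-f_0$, $\sigma d_V=g_1-f_1$; 1-cells compose componentwise, 2-cells compose vertically by addition, horizontal composite of $\sigma:f\Rightarrow g$ and $\sigma':f'\Rightarrow g'$ is $f'_1\sigma+\sigma' g_0$. $\mathbf{Ch}'_2(\mathcal{A})$ is its full sub-2-category on objects with zero differential. $\mathcal{A}$ split means every short exact sequence splits. The strict skeletal 2-group $\mathbb{G}=\pi_1[1]\rtimes_z\pi_0[0]$ is given by a group $\pi_0$, a left $\pi_0$-module $\pi_1$ (action $\rhd$) and a normalized 3-cocycle $z:\pi_0^3\to\pi_1$: its objects are elements of $\pi_0$, morphisms are pairs $(a,g):g\to g$ with $a\in\pi_1$, composition is addition in $\pi_1$, tensor product is $g\otimes g'=gg'$ and $(a,g)\otimes(a',g')=(a+g\rhd a',gg')$, associator $\alpha_{g,g',g''}=(z(g,g',g''),gg'g'')$, trivial unitors. $\mathbf{Rep}_{\mathbf{Ch}_2(\mathcal{A})}(\mathbb{G})$ is the 2-category of pseudofunctors $\mathbb{G}[1]\to\mathbf{Ch}_2(\mathcal{A})$ (where $\mathbb{G}[1]$ is the one-object bicategory with $\mathbb{G}$ as endomorphism 2-group), pseudonatural transformations and modifications; equivalence means equivalence in this 2-category. A representation $(\rho_1,\rho_0,\beta,c)$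 of $\mathbb{G}$ on $V_\bullet=(0:V_1\to V_0)$ is the pseudofunctor sending the unique object to $V_\bullet$, each $g\in\pi_0$ to the 1-cell $(\rho_1(g),\rho_0(g))$, each morphism $(a,g)$ to the 2-cell $\beta(a):V_0\to V_1$, with compositor $f^g\circ f^h\Rightarrow f^{gh}$ given by $c(g,h):V_0\to V_1$ and trivial unit constraint. Here $\rho_i:\pi_0\to\mathrm{Aut}_\mathcal{A}(V_i)$ are group homomorphisms, $\beta:\pi_1\to\mathcal{A}(V_0,V_1)$ is a morphism of left $\pi_0$-modules where $\pi_0$ acts on $\mathcal{A}(V_0,V_1)$ by $g\cdot\sigma=\rho_1(g)\circ\sigma\circ\rho_0(g)^{-1}$, and $c:\pi_0^2\to\mathcal{A}(V_0,V_1)$ is a normalized 2-cochain whose coboundary (for this module structure) equals $\beta\circ z$; these conditions are exactly the pseudofunctor axioms. *)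

From HB Require Import structures.
From mathcomp Require Import all_boot all_order all_algebra all_fingroup.
Set Implicit Arguments.
Unset Strict Implicit.
Unset Printing Implicit Defensive.
Import GRing.Theory.
Local Open Scope ring_scope.

Record kLinCat (k : fieldType) := KLinCat {
  obj :> Type;
  cHom : obj -> obj -> lmodType k;
  idm : forall A : obj, cHom A A;
  comp : forall A B D : obj, cHom B D -> cHom A B -> cHom A D;
  compA : forall A B D E (f : cHom D E) (g : cHom B D) (h : cHom A B),
      comp f (comp g h) = comp (comp f g) h;
  comp1m : forall A B (f : cHom A B), comp (idm B) f = f;
  compm1 : forall A B (f : cHom A B), comp f (idm A) = f;
  compDl : forall A B D (f f' : cHom B D) (g : cHom A B),
      comp (f + f') g = comp f g + comp f' g;
  compDr : forall A B D (f : cHom B D) (g g' : cHom A B),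
      comp f (g + g') = comp f g + comp f g';
  compZl : forall A B D (a : k) (f : cHom B D) (g : cHom A B),
      comp (a *: f) g = a *: comp f g;
  compZr : forall A B D (a : k) (f : cHom B D) (g : cHom A B),
      comp f (a *: g) = a *: comp f g
}.

Arguments cHom {k c} : rename.
Arguments idm {k c} : rename.
Arguments comp {k c A B D} : rename.
Notation "g \oo f" := (comp g f) (at level 40, left associativity).

Section Abelian.
Variables (k : fieldType) (C : kLinCat k).

Definition is_zero_obj (Z : C) :=
  (forall A (f : cHom Z A), f = 0) /\ (forall A (f : cHom A Z), f = 0).

Definition has_biproducts :=
  forall A B : C, exists (P : C) (i1 : cHom A P) (i2 : cHom B P)
                         (p1 : cHom P A) (p2 : cHom P B),
    [/\ p1 \oo i1 = idm A, p2 \oo i2 = idm B, p1 \oo i2 = 0, p2 \oo i1 = 0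
      & i1 \oo p1 + i2 \oo p2 = idm P].

Definition is_kernel (A B K : C) (f : cHom A B) (i : cHom K A) :=
  f \oo i = 0 /\
  forall (X : C) (h : cHom X A), f \oo h = 0 -> exists! u : cHom X K, i \oo u = h.

Definition is_cokernel (A B Q : C) (f : cHom A B) (p : cHom B Q) :=
  p \oo f = 0 /\
  forall (X : C) (h : cHom B X), h \oo f = 0 -> exists! u : cHom Q X, u \oo p = h.

Definition is_mono (A B : C) (f : cHom A B) :=
  forall (X : C) (g h : cHom X A), f \oo g = f \oo h -> g = h.

Definition is_epi (A B : C) (f : cHom A B) :=
  forall (X : C) (g h : cHom B X), g \oo f = h \oo f -> g = h.

Definition abelian_cat :=
  [/\ (exists Z : C, is_zero_obj Z) /\ has_biproducts,
      forall (A B : C) (f : cHom A B), exists (K : C) (i : cHom K A), is_kernel f i,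
      forall (A B : C) (f : cHom A B), exists (Q : C) (p : cHom B Q), is_cokernel f p,
      forall (A B : C) (f : cHom A B), is_mono f ->
         exists (Q : C) (p : cHom B Q), is_kernel p f
    & forall (A B : C) (f : cHom A B), is_epi f ->
         exists (K : C) (i : cHom K A), is_cokernel i f].

Definition short_exact (A B D : C) (f : cHom A B) (g : cHom B D) :=
  is_kernel g f /\ is_cokernel f g.

Definition split_cat :=
  forall (A B D : C) (f : cHom A B) (g : cHom B D), short_exact f g ->
    exists (r : cHom B A) (s : cHom D B),
      [/\ r \oo f = idm A, g \oo s = idm D & f \oo r + s \oo g = idm B].

End Abelian.

(* pi0 = the finite group G, pi1 = the finite abelian group M.          *)
Definition is_left_module (G : finGroupType) (M : zmodType) (act : G -> M -> M) :=
  [/\ forall a, act 1%g a = a,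
      forall g h a, act (g * h)%g a = act g (act h a)
    & forall g a b, act g (a + b) = act g a + act g b].

(* normalized 3-cocycle (= pentagon and triangle axioms for the associator
   alpha_{g,h,l} = (z g h l, ghl)) *)
Definition normalized_3cocycle (G : finGroupType) (M : zmodType)
    (act : G -> M -> M) (z : G -> G -> G -> M) :=
  [/\ forall g h, z 1%g g h = 0 /\ z g 1%g h = 0 /\ z g h 1%g = 0
    & forall g h l m,
        z g h (l * m)%g + z (g * h)%g l m
        = act g (z h l m) + z g (h * l)%g m + z g h l].

(* Representations on V = (0 : V1 -> V0) in Ch_2(A), i.e. pseudofunctors *)
(* G[1] -> Ch_2(A) with object V, g |-> (rho1 g, rho0 g),              *)
(* (a,g) |-> beta a, compositor phi_{g,h} = c g h, trivial unit         *)
(* constraint.  Below the pseudofunctor axioms are written out using    *)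
(* the formulas of the strict 2-category Ch_2(A) (vertical composition *)
(* = addition, horizontal composite of s:f=>g, s':f'=>g' is            *)
(* f'_1 s + s' g_0).  Since the differential of V is 0, every          *)
(* morphism V0 -> V1 is a 2-cell f => f for any 1-cell f : V -> V.      *)
Section Rep.
Variables (k : fieldType) (C : kLinCat k) (G : finGroupType) (M : zmodType).
Variables (act : G -> M -> M) (z : G -> G -> G -> M) (V1 V0 : C).

Definition is_rep (rho1 : G -> cHom V1 V1) (rho0 : G -> cHom V0 V0)
    (beta : M -> cHom V0 V1) (c : G -> G -> cHom V0 V1) :=
  [/\
      rho1 1%g = idm V1 /\ (forall g h, rho1 (g * h)%g = rho1 g \oo rho1 h),
      rho0 1%g = idm V0 /\ (forall g h, rho0 (g * h)%g = rho0 g \oo rho0 h),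
      (* functoriality on cHom-categories (vertical composition) *)
      (forall a b, beta (a + b) = beta a + beta b) /\
      (* naturality of the compositor w.r.t. (a,g) (x) (b,h) *)
      forall g h a b, beta (a + act g b) = rho1 g \oo beta b + beta a \oo rho0 h,
      (* unit axioms (trivial unit constraint) *)
      forall g, c 1%g g = 0 /\ c g 1%g = 0
    & (* associativity axiom *)
      forall g h l, beta (z g h l) + c (g * h)%g l + c g h \oo rho0 l
                    = c g (h * l)%g + rho1 g \oo c h l].

(* pseudonatural transformation F => F' with 1-cell (t1, t0) : V -> V and
   invertible 2-cells tg g : F'(g) o t => t o F(g). *)
Definition is_pstrans
    (rho1 : G -> cHom V1 V1) (rho0 : G -> cHom V0 V0)
    (beta : M -> cHom V0 V1) (c : G -> G -> cHom V0 V1)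
    (rho1' : G -> cHom V1 V1) (rho0' : G -> cHom V0 V0)
    (beta' : M -> cHom V0 V1) (c' : G -> G -> cHom V0 V1)
    (t1 : cHom V1 V1) (t0 : cHom V0 V0) (tg : G -> cHom V0 V1) :=
  [/\ (* tg g is a 2-cell of Ch_2(A) between F'(g) o t and t o F(g) *)
      forall g, rho1' g \oo t1 = t1 \oo rho1 g /\ rho0' g \oo t0 = t0 \oo rho0 g,
      (* naturality w.r.t. 2-cells (a,g) *)
      forall a, t1 \oo beta a = beta' a \oo t0,
      (* unit axiom *)
      tg 1%g = 0
    & (* compatibility with compositors *)
      forall g h, tg (g * h)%g + c' g h \oo t0
                  = t1 \oo c g h + tg g \oo rho0 h + rho1' g \oo tg h].

(* modification (t, tg) ==> (u, ug) between transformations F => F'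
   (rho1' is the 1-cell part of F', rho0 the 0-part of F) *)
Definition is_modif (rho0 : G -> cHom V0 V0) (rho1' : G -> cHom V1 V1)
    (t1 : cHom V1 V1) (t0 : cHom V0 V0) (tg : G -> cHom V0 V1)
    (u1 : cHom V1 V1) (u0 : cHom V0 V0) (ug : G -> cHom V0 V1)
    (gam : cHom V0 V1) :=
  [/\ t1 = u1, t0 = u0 &
      forall g, gam \oo rho0 g + tg g = ug g + rho1' g \oo gam].

(* invertible modification (vertical composition = addition, identity = 0) *)
Definition is_inv_modif (rho1 : G -> cHom V1 V1) (rho0 : G -> cHom V0 V0)
    (rho1' : G -> cHom V1 V1) (rho0' : G -> cHom V0 V0)
    (t1 : cHom V1 V1) (t0 : cHom V0 V0) (tg : G -> cHom V0 V1)
    (u1 : cHom V1 V1) (u0 : cHom V0 V0) (ug : G -> cHom V0 V1) :=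
  exists gam gam' : cHom V0 V1,
    [/\ is_modif rho0 rho1' t1 t0 tg u1 u0 ug gam,
        is_modif rho0 rho1' u1 u0 ug t1 t0 tg gam',
        gam + gam' = 0 & gam' + gam = 0].

(* equivalence in Rep_{Ch_2(A)}(G): transformations t : F => F',
   s : F' => F with invertible modifications s o t ~= id_F and
   t o s ~= id_F'.  Composite (s o t) has 1-cell (s1 t1, s0 t0) and
   components (s o t)_g = sg g o t0 + s1 o tg g; the identity
   transformation has 1-cell identities and zero components. *)
Definition rep_equiv
    (rho1 : G -> cHom V1 V1) (rho0 : G -> cHom V0 V0)
    (beta : M -> cHom V0 V1) (c : G -> G -> cHom V0 V1)
    (rho1' : G -> cHom V1 V1) (rho0' : G -> cHom V0 V0)
    (beta' : M -> cHom V0 V1) (c' : G -> G -> cHom V0 V1) :=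
  exists (t1 : cHom V1 V1) (t0 : cHom V0 V0) (tg : G -> cHom V0 V1)
         (s1 : cHom V1 V1) (s0 : cHom V0 V0) (sg : G -> cHom V0 V1),
  [/\ is_pstrans rho1 rho0 beta c rho1' rho0' beta' c' t1 t0 tg,
      is_pstrans rho1' rho0' beta' c' rho1 rho0 beta c s1 s0 sg,
      is_inv_modif rho1 rho0 rho1 rho0
        (s1 \oo t1) (s0 \oo t0) (fun g => sg g \oo t0 + s1 \oo tg g)
        (idm V1) (idm V0) (fun _ => 0)
    & is_inv_modif rho1' rho0' rho1' rho0'
        (t1 \oo s1) (t0 \oo s0) (fun g => tg g \oo s0 + t1 \oo sg g)
        (idm V1) (idm V0) (fun _ => 0)].

End Rep.

(** An additive map from the finite group [pi_1] to a vector space over a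
    field of characteristic zero vanishes, since [#|pi_1| *: beta a = 0]; so
    [beta = 0] and the compositor [c] becomes an ordinary 2-cocycle of [pi_0]
    with values in the bimodule [Hom(V_0, V_1)].  Averaging over the finite
    group [pi_0] exhibits it as the coboundary of a 1-cochain [T], and
    [T], [-T] are the 2-cells of a pair of mutually inverse pseudonatural
    transformations with identity 1-cells between [(rho1, rho0, 0, c)] and
    [(rho1, rho0, 0, 0)]. *)

From HB Require Import structures.
From mathcomp Require Import all_boot all_order all_algebra all_fingroup.
From mathcomp Require Import cyclic.

Set Implicit Arguments.
Unset Strict Implicit.
Unset Printing Implicit Defensive.
Import GRing.Theory.
Local Open Scope ring_scope.

Section LinearCategory.
Variables (k : fieldType) (C : kLinCat k).

Lemma comp0m (A B D : C) (g : cHom A B) : (0 : cHom B D) \oo g = 0.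
Proof.
apply: (addrI ((0 : cHom B D) \oo g)).
by rewrite -compDl !addr0.
Qed.

Lemma compm0 (A B D : C) (f : cHom B D) : f \oo (0 : cHom A B) = 0.
Proof.
apply: (addrI (f \oo (0 : cHom A B))).
by rewrite -compDr !addr0.
Qed.

Lemma compNl (A B D : C) (f : cHom B D) (g : cHom A B) : (- f) \oo g = - (f \oo g).
Proof. by apply/eqP; rewrite -subr_eq0 opprK -compDl addNr comp0m. Qed.

Lemma compNr (A B D : C) (f : cHom B D) (g : cHom A B) : f \oo (- g) = - (f \oo g).
Proof. by apply/eqP; rewrite -subr_eq0 opprK -compDr addNr compm0. Qed.

Lemma comp_suml (A B D : C) (I : finType) (F : I -> cHom B D) (g : cHom A B) :
  (\sum_i F i) \oo g = \sum_i (F i \oo g).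
Proof.
by apply: (big_morph (fun x : cHom B D => x \oo g)) => [x y|]; rewrite ?compDl ?comp0m.
Qed.

Lemma comp_sumr (A B D : C) (I : finType) (F : I -> cHom A B) (f : cHom B D) :
  f \oo (\sum_i F i) = \sum_i (f \oo F i).
Proof.
by apply: (big_morph (fun x : cHom A B => f \oo x)) => [x y|]; rewrite ?compDr ?compm0.
Qed.

End LinearCategory.

Lemma finZmod_mulrn_card (M : finZmodType) (x : M) : x *+ #|M| = 0.
Proof. by rewrite -FinRing.zmodXgE -cardsT expg_cardG ?inE. Qed.

Lemma additive_finZmod_char0_eq0 (k : fieldType) (V : lmodType k)
    (M : finZmodType) (f : M -> V) :
  [pchar k] =i pred0 -> (forall a b, f (a + b) = f a + f b) -> forall a, f a = 0.
Proof.
move=> /pcharf0P char0 fD a.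
have f0 : f 0 = 0 by apply: (addrI (f 0)); rewrite -fD !addr0.
have fMn n : f (a *+ n) = f a *+ n.
  by elim: n => [|n IHn]; rewrite ?f0 // !mulrS fD IHn.
have cardM_neq0 : (#|M|%:R : k) != 0.
  by rewrite char0 -lt0n; apply/card_gt0P; exists a.
rewrite -[f a]scale1r -(mulVf cardM_neq0) -scalerA scaler_nat -fMn.
by rewrite finZmod_mulrn_card f0 scaler0.
Qed.

Section TwistedCohomology.
Variables (k : fieldType) (C : kLinCat k) (G : finGroupType) (V1 V0 : C).
Variables (rho1 : G -> cHom V1 V1) (rho0 : G -> cHom V0 V0).
Hypotheses (rho0_1 : rho0 1%g = idm V0)
           (rho0M : forall g h, rho0 (g * h)%g = rho0 g \oo rho0 h).

(* [Hom(V0, V1)] is a [G]-bimodule: [rho1] acts on the left, [rho0] on the right. *)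
Definition cocycle2 (c : G -> G -> cHom V0 V1) :=
  forall g h l, c (g * h)%g l + c g h \oo rho0 l = c g (h * l)%g + rho1 g \oo c h l.

Definition coboundary_of (c : G -> G -> cHom V0 V1) (T : G -> cHom V0 V1) :=
  forall g h, T (g * h)%g + c g h = T g \oo rho0 h + rho1 g \oo T h.

Definition average_cochain (c : G -> G -> cHom V0 V1) (g : G) : cHom V0 V1 :=
  (#|G|%:R : k)^-1 *: \sum_(l : G) c g l \oo rho0 l^-1%g.

Lemma rho0V (l : G) : rho0 l \oo rho0 l^-1%g = idm V0.
Proof. by rewrite -rho0M mulgV rho0_1. Qed.

Lemma average_cochain1 c : (forall l, c 1%g l = 0) -> average_cochain c 1%g = 0.
Proof.
by move=> c1; rewrite /average_cochain big1 ?scaler0 // => l _; rewrite c1 comp0m.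
Qed.

(* Sum the cocycle identity at [(g, h, l)], composed with [rho0 l^-1], over [l]. *)
Lemma sum_cocycle2 c g h : cocycle2 c ->
  \sum_(l : G) c (g * h)%g l \oo rho0 l^-1%g + c g h *+ #|G|
  = (\sum_(l : G) c g l \oo rho0 l^-1%g) \oo rho0 h
    + rho1 g \oo \sum_(l : G) c h l \oo rho0 l^-1%g.
Proof.
move=> cc.
have cancel_l l : c g h \oo rho0 l \oo rho0 l^-1%g = c g h.
  by rewrite -compA rho0V compm1.
rewrite -sumr_const -(eq_bigr _ (fun l _ => cancel_l l)) -big_split /=.
under eq_bigr do rewrite -compDl cc compDl.
rewrite big_split /= comp_suml comp_sumr (reindex_inj (mulgI h^-1%g)) /=.
congr (_ + _); apply: eq_bigr => l _; last by rewrite compA.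
by rewrite mulKVg invMg invgK rho0M compA.
Qed.

Lemma average_cochainP c :
  [pchar k] =i pred0 -> cocycle2 c -> coboundary_of c (average_cochain c).
Proof.
move=> /pcharf0P char0 cc g h.
have cardG_neq0 : (#|G|%:R : k) != 0 by rewrite char0 -lt0n; apply/card_gt0P; exists 1%g.
rewrite /average_cochain compZl compZr -scalerDr -sum_cocycle2 //.
by rewrite scalerDr -scaler_nat scalerA mulVf // scale1r.
Qed.

End TwistedCohomology.

Section Representations.
Variables (k : fieldType) (C : kLinCat k) (G : finGroupType) (M : zmodType).
Variables (act : G -> M -> M) (z : G -> G -> G -> M) (V1 V0 : C).
Variables (rho1 : G -> cHom V1 V1) (rho0 : G -> cHom V0 V0).

Lemma is_rep_beta0 (c : G -> G -> cHom V0 V1) :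
  rho1 1%g = idm V1 /\ (forall g h, rho1 (g * h)%g = rho1 g \oo rho1 h) ->
  rho0 1%g = idm V0 /\ (forall g h, rho0 (g * h)%g = rho0 g \oo rho0 h) ->
  (forall g, c 1%g g = 0 /\ c g 1%g = 0) ->
  cocycle2 rho1 rho0 c ->
  is_rep act z rho1 rho0 (fun _ : M => 0) c.
Proof.
move=> rho1_hom rho0_hom c_unit cc; split=> //.
  by split=> [a b | g h a b]; rewrite ?addr0 // compm0 comp0m addr0.
by move=> g h l; rewrite add0r.
Qed.

Lemma is_pstrans_idm (c c' : G -> G -> cHom V0 V1) (tg : G -> cHom V0 V1) :
  tg 1%g = 0 ->
  (forall g h, tg (g * h)%g + c' g h = c g h + tg g \oo rho0 h + rho1 g \oo tg h) ->
  is_pstrans rho1 rho0 (fun _ : M => 0) c rho1 rho0 (fun _ : M => 0) c'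
    (idm V1) (idm V0) tg.
Proof.
move=> tg1 tgM; split=> // [g | a | g h].
- by rewrite !comp1m !compm1.
- by rewrite compm0 comp0m.
- by rewrite compm1 comp1m tgM.
Qed.

Lemma is_inv_modif_eq (t1 u1 : cHom V1 V1) (t0 u0 : cHom V0 V0)
    (tg ug : G -> cHom V0 V1) :
  t1 = u1 -> t0 = u0 -> tg =1 ug ->
  is_inv_modif rho1 rho0 rho1 rho0 t1 t0 tg u1 u0 ug.
Proof.
move=> <- <- tgE; exists 0, 0; split; rewrite ?addr0 //.
  by split=> // g; rewrite comp0m compm0 add0r addr0 tgE.
by split=> // g; rewrite comp0m compm0 add0r addr0 tgE.
Qed.

Lemma rep_equiv_coboundary (c : G -> G -> cHom V0 V1) (T : G -> cHom V0 V1) :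
  T 1%g = 0 -> coboundary_of rho1 rho0 c T ->
  rep_equiv rho1 rho0 (fun _ : M => 0) c rho1 rho0 (fun _ : M => 0) (fun _ _ => 0).
Proof.
move=> T1 cobT.
exists (idm V1), (idm V0), (fun g => - T g), (idm V1), (idm V0), T; split.
- apply: is_pstrans_idm => [|g h]; first by rewrite T1 oppr0.
  by rewrite addr0 compNl compNr -addrA -opprD -cobT opprD addrCA subrr addr0.
- apply: is_pstrans_idm => // g h.
  by rewrite add0r cobT.
- by apply: is_inv_modif_eq => [|| g /=]; rewrite ?comp1m // compm1 subrr.
- by apply: is_inv_modif_eq => [|| g /=]; rewrite ?comp1m // compm1 addNr.
Qed.

End Representations.

Theorem mainTheorem5
  (k : fieldType) (char0 : [pchar k] =i pred0)
  (C : kLinCat k) (HA : abelian_cat C) (HS : split_cat C)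
  (G : finGroupType) (M : finZmodType)
  (act : G -> M -> M) (Hact : is_left_module act)
  (z : G -> G -> G -> M) (Hz : normalized_3cocycle act z)
  (V1 V0 : C)
  (rho1 : G -> cHom V1 V1) (rho0 : G -> cHom V0 V0)
  (beta : M -> cHom V0 V1) (c : G -> G -> cHom V0 V1)
  (Hrep : is_rep act z rho1 rho0 beta c) :
  (forall a, beta a = 0) /\
  [/\ is_rep act z rho1 rho0 (fun _ : M => 0) c,
      is_rep act z rho1 rho0 (fun _ : M => 0) (fun _ _ => 0)
    & rep_equiv rho1 rho0 (fun _ : M => 0) c rho1 rho0 (fun _ : M => 0) (fun _ _ => 0)].
Proof.
case: Hrep => rho1_hom rho0_hom [betaD _] c_unit c_assoc.
have [rho0_1 rho0M] := rho0_hom.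
have beta0 : forall a, beta a = 0 := additive_finZmod_char0_eq0 char0 betaD.
have cc : cocycle2 rho1 rho0 c by move=> g h l; rewrite -c_assoc beta0 add0r.
have cc0 : cocycle2 rho1 rho0 (fun _ _ => 0 : cHom V0 V1).
  by move=> g h l; rewrite comp0m compm0.
split=> //; split.
- exact: is_rep_beta0 rho1_hom rho0_hom c_unit cc.
- exact: is_rep_beta0 rho1_hom rho0_hom (fun=> conj erefl erefl) cc0.
have T1 : average_cochain rho0 c 1%g = 0.
  by apply: average_cochain1 => l; case: (c_unit l).
exact: (rep_equiv_coboundary _ T1 (average_cochainP rho0_1 rho0M char0 cc)).
Qed.
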